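(* Let $\mathcal{X}$ be a nonempty closed domain set whose closed convex hull $\operatorname{clconv}(\mathcal{X})$ contains no line, and let $0\le\tilde m\le m$ be integers. Suppose that $F+\widehat F\subseteq\mathcal{X}$ for every face $F$ of $\operatorname{clconv}(\mathcal{X})$ of dimension at most $\tilde m$ and every face $\widehat F$ of the recession cone $\operatorname{rec}(\operatorname{clconv}(\mathcal{X}))$ of dimension at most $\tilde m+1$. Then for every matrix $A_0$ and every system of $m$ LMIs of dimension $\tilde m$, $\mathbf{V}_{\mathrm{opt}}=\mathbf{V}_{\mathrm{rel}}$.
   Context: Let $\mathcal{Q}$ be one of $\mathbb{S}^n_+$, $\mathbb{S}^n$ or $\mathbb{R}^{n\times p}$, where $k\le n\le p$ are positive integers, with trace inner product $\langle A,X\rangle=\operatorname{tr}(A^\top X)$. A domain set is a set $\mathcal{X}=\{X\in\mathcal{Q}:\operatorname{rank}(X)\le k,\ F_j(X)\le0\ \forall j\in[t]\}$ with each $F_j:\mathcal{Q}\to\mathbb{R}$ continuous. A system of $m$ LMIs consists of matrices $A_1,\dots,A_m$ (same size as elements of $\mathcal{Q}$, possibly non-symmetric) and bounds $-\infty\le b_i^l\le b_i^u\le+\infty$; its dimension is $\dim\operatorname{span}\{A_1,\dots,A_m\}$. Set $\mathcal{C}=\{X\in\mathcal{X}: b_i^l\le\langle A_i,X\rangle\le b_i^u\ \forall i\}$, $\mathcal{C}_{\mathrm{rel}}=\{X\in\operatorname{clconv}(\mathcal{X}): b_i^l\le\langle A_i,X\rangle\le b_i^u\ \forall i\}$, and for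 an objective matrix $A_0$, $\mathbf{V}_{\mathrm{opt}}=\inf_{X\in\mathcal{C}}\langle A_0,X\rangle$ (the rank-constrained problem) and $\mathbf{V}_{\mathrm{rel}}=\inf_{X\in\mathcal{C}_{\mathrm{rel}}}\langle A_0,X\rangle$ (its Dantzig–Wolfe relaxation). A face of a closed convex set $D$ is a convex $F\subseteq D$ such that any segment $[a,b]\subseteq D$ whose open part meets $F$ lies in $F$; its dimension is that of its affine hull. $\operatorname{rec}(D)=\{d: x+td\in D\ \forall x\in D,\ t\ge0\}$. *)

From HB Require Import structures.
From mathcomp Require Import all_boot all_order all_algebra.
From mathcomp Require Import all_classical all_reals all_analysis.
Set Implicit Arguments. Unset Strict Implicit. Unset Printing Implicit Defensive.
Import Order.TTheory GRing.Theory Num.Theory.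
Import numFieldNormedType.Exports numFieldTopology.Exports.
Local Open Scope classical_set_scope.
Local Open Scope ring_scope.

(* The three possible ambient spaces Q. Elements are stored as n x p matrices;
   for S^n and S^n_+ the matrix must be square (p = n). *)
Inductive qkind := QPSD | QSym | QRect.

Section Defs.
Variable R : realType.

Definition sq_of (n p : nat) (e : p = n) (X : 'M[R]_(n, p)) : 'M[R]_n :=
  castmx (erefl n, e) X.

Definition Qset (kd : qkind) (n p : nat) : set 'M[R]_(n, p) :=
  match kd with
  | QRect => setT
  | QSym => [set X | exists e : p = n, (sq_of e X)^T = sq_of e X]
  | QPSD => [set X | exists e : p = n, (sq_of e X)^T = sq_of e X /\
                 forall v : 'rV[R]_n, 0 <= (v *m sq_of e X *m v^T) 0 0]
  end.

Definition mxip (n p : nat) (A X : 'M[R]_(n, p)) : R := \tr (A^T *m X).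

Definition domain_set (kd : qkind) (n p k t : nat)
  (F : 'I_t -> 'M[R]_(n, p) -> R) : set 'M[R]_(n, p) :=
  [set X | @Qset kd n p X /\ (\rank X <= k)%N /\ forall j, F j X <= 0].

Section Convex.
Variable (V : lmodType R).

Definition conv_hull (S : set V) : set V :=
  [set x | exists (q : nat) (w : 'I_q -> R) (y : 'I_q -> V),
     (forall i, 0 <= w i) /\ \sum_(i < q) w i = 1 /\ (forall i, S (y i)) /\
     x = \sum_(i < q) w i *: y i].

Definition no_line (D : set V) : Prop :=
  ~ exists (x d : V), d != 0 /\ forall t : R, D (x + t *: d).

Definition rec_cone (D : set V) : set V :=
  [set d | forall x, D x -> forall t : R, 0 <= t -> D (x + t *: d)].

Definition is_face (D F : set V) : Prop :=
  F `<=` D /\ convex_set F /\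
  forall a b, D a -> D b ->
    (exists l : R, 0 < l < 1 /\ F ((1 - l) *: a + l *: b)) ->
    forall l : R, 0 <= l <= 1 -> F ((1 - l) *: a + l *: b).

Definition mink_sum (A B : set V) : set V := [set x + y | x in A & y in B].
End Convex.

Section Dim.
Variable (V : vectType R).

(* dimension of the affine hull of S: the least d such that the direction
   space span{x - y : x, y in S} is spanned by d vectors (0 for S empty) *)
Definition spans_dir (S : set V) (d : nat) : bool :=
  `[< exists s : seq V, size s = d /\
        forall x y, S x -> S y -> (x - y) \in (span s)%VS >].

Lemma spans_dir_ex (S : set V) : exists d, spans_dir S d.
Proof.
exists (size (vbasis (fullv : {vspace V}))); apply/asboolP.
exists (vbasis fullv); split => // x y _ _.
by rewrite (span_basis (vbasisP fullv)) memvf.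
Qed.

Definition aff_dim (S : set V) : nat := ex_minn (spans_dir_ex S).
End Dim.

Definition clconv (n p : nat) (S : set 'M[R]_(n, p)) : set 'M[R]_(n, p) :=
  closure (conv_hull S : set 'M[R]_(n, p)).

Definition lmi_dim (n p m : nat) (A : 'I_m -> 'M[R]_(n, p)) : nat :=
  \dim (span [seq A i | i <- enum 'I_m])%VS.

Definition lmi_feas (n p m : nat) (Y : set 'M[R]_(n, p))
  (A : 'I_m -> 'M[R]_(n, p)) (bl bu : 'I_m -> \bar R) : set 'M[R]_(n, p) :=
  [set X | Y X /\ forall i, (bl i <= (mxip (A i) X)%:E <= bu i)%E].

Definition lin_inf (n p : nat) (A0 : 'M[R]_(n, p)) (C : set 'M[R]_(n, p)) : \bar R :=
  ereal_inf [set (mxip A0 X)%:E | X in C].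

End Defs.
Arguments Qset {R} kd n p.

(* Let D = clconv X and let s be a basis of span{A_i}, of size mt.
   From any feasible point Y of the relaxation, move inside D orthogonally to s
   (so all <A_i, .> are kept) without increasing <A0, .>.  While the smallest face
   of D through the current point has dimension > mt, it contains such a
   direction; follow it (or its opposite) to the relative boundary, which lowers
   that dimension.  Since D has no line, the only way this can fail is that the
   ray never leaves D, which gives a recession direction Z, orthogonal to s, with
   <A0, Z> < 0.  Running the same descent in rec(D) with constraints A0 :: s moves
   Z into a face of rec(D) of dimension <= mt + 1, and running it in D with zero
   objective moves Y into a face of dimension <= mt.  By hypothesis, the sum of
   these two faces lies in X, and going far enough along Z beats <A0, Y>. *)

From HB Require Import structures.
From mathcomp Require Import all_boot all_order all_algebra.
From mathcomp Require Import all_classical all_reals all_analysis.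
From mathcomp Require Import ring lra zify.
Import Order.TTheory GRing.Theory Num.Theory.
Import numFieldNormedType.Exports numFieldTopology.Exports.
Local Open Scope classical_set_scope.
Local Open Scope ring_scope.

Set Implicit Arguments. Unset Strict Implicit. Unset Printing Implicit Defensive.

Section ConvexGeometry.
Variables (R : realType) (V : lmodType R).
Implicit Types (D : set V) (x y u v w Y Z : V).

Definition is_convex D := forall x y (l : R), D x -> D y -> 0 <= l <= 1 ->
  D ((1 - l) *: x + l *: y).

Lemma is_convex_convex_set D : is_convex D -> convex_set D.
Proof.
move=> cD x y l; rewrite !in_setE => Dx Dy.
have -> : conv l x y = (1 - l%:num) *: (y : V) + l%:num *: (x : V).
  by rewrite [RHS]addrC.
by apply: cD; rewrite ?ge0 ?le1.
Qed.

Lemma convex_shift D Y u v (l : R) : is_convex D -> D (Y + u) -> D (Y + v) ->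
  0 <= l <= 1 -> D (Y + ((1 - l) *: u + l *: v)).
Proof.
move=> cD Du Dv hl; have := cD _ _ _ Du Dv hl.
by rewrite !scalerDr addrACA -scalerDl subrK scale1r.
Qed.

Lemma convex_segment D Y u (a b : R) : is_convex D -> D Y -> D (Y + a *: u) ->
  0 <= b <= a -> D (Y + b *: u).
Proof.
move=> cD DY Da /andP [b0 ba].
have [a0|a0] := eqVneq a 0.
  have -> : b = 0 by apply/eqP; rewrite eq_le b0 -a0 ba.
  by rewrite scale0r addr0.
have ap : 0 < a by rewrite lt_neqAle eq_sym a0 (le_trans b0 ba).
have hl : 0 <= b / a <= 1 by rewrite divr_ge0 ?ler_pdivrMr ?mul1r //= ltW.
have DY0 : D (Y + 0) by rewrite addr0.
have := convex_shift cD DY0 Da hl.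
by rewrite scaler0 add0r scalerA divfK.
Qed.

(* [Y] is the point of weight [1 / (1 + d)] on the segment from
   [Y + d (Y - c)] to [c + w]. *)
Lemma convex_contract D Y c w (d : R) : is_convex D -> D (Y + d *: (Y - c)) ->
  0 <= d -> D (c + w) -> D (Y + (d / (1 + d)) *: w).
Proof.
move=> cD Dc' d0 Dw; set l := d / (1 + d).
have d1p : 0 < 1 + d by rewrite ltr_pwDl.
have d1 : 1 + d != 0 := lt0r_neq0 d1p.
have hl : 0 <= l <= 1 by rewrite divr_ge0 ?ler_pdivrMr ?mul1r ?lerDr // ltW.
have ld : (1 - l) * d = l by rewrite /l; field.
have := cD _ _ _ Dc' Dw hl.
by rewrite scalerDr scalerA ld scalerBr scalerDr !addrA subrK -scalerDl subrK scale1r.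
Qed.

Lemma convex_half_sum D Y u v (e : R) : is_convex D -> D (Y + e *: u) ->
  D (Y + e *: v) -> D (Y + (e / 2) *: (u + v)).
Proof.
move=> cD Du Dv.
have hl : 0 <= (2^-1 : R) <= 1 by rewrite invr_ge0 ler0n /= invf_le1 ?ltr0n ?ler1n.
have := convex_shift cD Du Dv hl.
have half : 1 - 2^-1 = 2^-1 :> R by field.
by rewrite half !scalerA [2^-1 * e]mulrC -scalerDr.
Qed.

(* [u] is a direction in which [Y] can move both ways inside [D]; for convex
   [D] these directions form the direction space of the smallest face of [D]
   containing [Y]. *)
Definition face_dir D Y u := exists2 e : R, 0 < e & D (Y + e *: u) /\ D (Y - e *: u).

Definition min_face D Y : set V := [set a | D a /\ face_dir D Y (a - Y)].

Lemma face_dir0 D Y : D Y -> face_dir D Y 0.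
Proof. by move=> DY; exists 1 => //; rewrite scaler0 addr0 subr0. Qed.

Lemma face_dirZ D Y (k : R) u : D Y -> face_dir D Y u -> face_dir D Y (k *: u).
Proof.
move=> DY [e e0 [Dp Dm]].
have [->|k0] := eqVneq k 0; first by rewrite scale0r; exact: face_dir0.
have [kp|kn] := ltP 0 k.
  exists (e / k); first exact: divr_gt0.
  by rewrite scalerA divfK.
have kn' : k < 0 by rewrite lt_neqAle k0 kn.
exists (e / - k); first by rewrite divr_gt0 ?oppr_gt0.
by rewrite scalerA invrN mulrN mulNr divfK // scaleNr opprK; split.
Qed.

Lemma face_dirD D Y u v : is_convex D -> D Y -> face_dir D Y u -> face_dir D Y v ->
  face_dir D Y (u + v).
Proof.
move=> cD DY [e1 e10 [Du1 Du2]] [e2 e20 [Dv1 Dv2]].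
pose e := Num.min e1 e2.
have e0 : 0 < e by rewrite lt_min e10.
have he1 : 0 <= e <= e1 by rewrite ltW //= ge_min lexx.
have he2 : 0 <= e <= e2 by rewrite ltW //= ge_min lexx orbT.
rewrite -!scalerN in Du2 Dv2.
exists (e / 2); first by rewrite divr_gt0.
split; first exact: convex_half_sum (convex_segment cD DY Du1 he1)
                                    (convex_segment cD DY Dv1 he2).
rewrite -scalerN opprD.
exact: convex_half_sum (convex_segment cD DY Du2 he1) (convex_segment cD DY Dv2 he2).
Qed.

Lemma face_dir_inward D Y c u (d : R) : is_convex D -> 0 < d ->
  D (Y + d *: (Y - c)) -> face_dir D c u -> face_dir D Y u.
Proof.
move=> cD d0 Dc' [e e0 [Dp Dm]].
have l0 : 0 < d / (1 + d) by rewrite divr_gt0 // addr_gt0.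
exists (d / (1 + d) * e); first exact: mulr_gt0.
rewrite -!(scalerA (d / (1 + d))) -scalerN.
by split; apply: (convex_contract cD Dc' (ltW d0)); rewrite ?scalerN.
Qed.

Lemma is_convex_min_face D Y : is_convex D -> D Y -> is_convex (min_face D Y).
Proof.
move=> cD DY a b l [Da ha] [Db hb] hl; split; first exact: cD.
have -> : (1 - l) *: a + l *: b - Y = (1 - l) *: (a - Y) + l *: (b - Y).
  by rewrite !scalerBr addrACA -opprD -scalerDl subrK scale1r.
by apply: face_dirD => //; apply: face_dirZ.
Qed.

Lemma face_dir_chord D Y a b (l : R) : is_convex D -> D Y -> D a -> D b ->
  0 < l < 1 -> face_dir D Y (a + l *: (b - a) - Y) -> face_dir D Y (b - a).
Proof.
move=> cD DY Da Db /andP [l0 l1] [e e0 [_ Dm]].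
have Dc' : D (Y + e *: (Y - (a + l *: (b - a)))) by rewrite -opprB scalerN.
pose th := e / (1 + e).
have th0 : 0 < th by rewrite divr_gt0 // addr_gt0.
have Da' : D (Y + (th * l) *: - (b - a)).
  rewrite -scalerA; apply: (convex_contract cD Dc' (ltW e0)).
  by rewrite scalerN addrK.
have Db' : D (Y + (th * (1 - l)) *: (b - a)).
  rewrite -scalerA; apply: (convex_contract cD Dc' (ltW e0)).
  by rewrite -addrA -scalerDl [l + _]addrC subrK scale1r addrC subrK.
have m0 : 0 < Num.min l (1 - l) by rewrite lt_min l0 subr_gt0.
exists (th * Num.min l (1 - l)); first exact: mulr_gt0.
split; last rewrite -scalerN;
  [apply: (convex_segment cD DY Db') | apply: (convex_segment cD DY Da')];
  by rewrite mulr_ge0 ?(ltW th0) ?(ltW m0) //= ler_pM2l // ge_min lexx ?orbT.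
Qed.

Lemma is_face_min_face D Y : is_convex D -> D Y -> is_face D (min_face D Y).
Proof.
move=> cD DY; have cF := is_convex_min_face cD DY.
split; first by move=> a [].
split; first exact: is_convex_convex_set.
move=> a b Da Db [l [l01 [_ hc]]] l' hl'.
have ec : (1 - l) *: a + l *: b = a + l *: (b - a).
  by rewrite scalerBl scale1r scalerBr addrAC addrA.
rewrite ec in hc; have hu := face_dir_chord cD DY Da Db l01 hc.
apply: cF => //; split=> //.
  have -> : a - Y = (a + l *: (b - a) - Y) + (- l) *: (b - a).
    by rewrite scaleNr addrAC addrK.
  by apply: face_dirD => //; apply: face_dirZ.
have -> : b - Y = (a + l *: (b - a) - Y) + (1 - l) *: (b - a).
  rewrite addrAC -[a + _ + _]addrA -scalerDl [l + _]addrC subrK scale1r.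
  by rewrite [a + _]addrC subrK.
by apply: face_dirD => //; apply: face_dirZ.
Qed.

Lemma rec_cone0 D : rec_cone D 0.
Proof. by move=> x Dx t _; rewrite scaler0 addr0. Qed.

Lemma rec_coneZ D (k : R) Z : 0 <= k -> rec_cone D Z -> rec_cone D (k *: Z).
Proof. by move=> k0 rZ x Dx t t0; rewrite scalerA; apply: rZ; rewrite ?mulr_ge0. Qed.

Lemma is_convex_rec_cone D : is_convex D -> is_convex (rec_cone D).
Proof.
move=> cD d1 d2 l r1 r2 hl x Dx t t0.
have := convex_shift cD (r1 x Dx t t0) (r2 x Dx t t0) hl.
by rewrite !scalerA scalerDr !scalerA [t * _]mulrC [t * _]mulrC.
Qed.

Lemma rec_cone_opp_eq0 D x0 Z : no_line D -> D x0 -> rec_cone D Z ->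
  rec_cone D (- Z) -> Z = 0.
Proof.
move=> nl Dx0 rZ rN; apply: contrapT => /eqP nZ; apply: nl; exists x0, Z.
split=> // t; have [t0|t0] := leP 0 t; first exact: rZ.
have -> : t *: Z = (- t) *: (- Z) by rewrite scaleNr scalerN opprK.
by apply: rN; rewrite // oppr_ge0 ltW.
Qed.

Lemma no_line_rec_cone D x0 : D x0 -> no_line D -> no_line (rec_cone D).
Proof.
move=> Dx0 nl [x [Z [nZ rZ]]]; apply: nl; exists (x0 + x), Z; split=> // t.
by rewrite -addrA; have := rZ t x0 Dx0 1 ler01; rewrite scale1r.
Qed.

Lemma is_face_rec_cone0 D x0 : D x0 -> no_line D -> is_face (rec_cone D) [set 0].
Proof.
move=> Dx0 nl; have c0 : is_convex [set (0 : V)].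
  by move=> _ _ l -> -> _; rewrite !scaler0 addr0.
split; first by move=> _ ->; exact: rec_cone0.
split; first exact: is_convex_convex_set.
move=> a b ra rb [l [/andP [l0 l1] /eqP]]; rewrite addr_eq0 => /eqP hab l' hl'.
have l1' : 0 < 1 - l by rewrite subr_gt0.
have ra' : rec_cone D (- a).
  have -> : - a = ((1 - l)^-1 * l) *: b.
    by rewrite -scalerA -[l *: b]opprK -hab scalerN scalerA mulVf ?gt_eqF ?scale1r.
  by apply: rec_coneZ rb; rewrite mulr_ge0 ?invr_ge0 ?ltW.
have rb' : rec_cone D (- b).
  have -> : - b = (l^-1 * (1 - l)) *: a.
    by rewrite -scalerA hab scalerN scalerA mulVf ?gt_eqF ?scale1r.
  by apply: rec_coneZ ra; rewrite mulr_ge0 ?invr_ge0 ?ltW.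
by apply: c0 => //; apply: (rec_cone_opp_eq0 nl Dx0).
Qed.

Lemma face_dir_rec_cone D Z : rec_cone D Z -> face_dir (rec_cone D) Z Z.
Proof.
move=> rZ; exists 2^-1; first by rewrite invr_gt0.
by rewrite -{1 3}(scale1r Z) -scalerDl -scalerBl; split; apply: rec_coneZ;
  rewrite // ?subr_ge0 ?addr_ge0 ?invr_ge0 ?invf_le1 ?ler1n.
Qed.

Definition ray_bounded D Y Z :=
  exists M : R, forall t, 0 <= t -> D (Y + t *: Z) -> t <= M.

Lemma unbounded_ray D Y Z : is_convex D -> D Y -> ~ ray_bounded D Y Z ->
  forall t, 0 <= t -> D (Y + t *: Z).
Proof.
move=> cD DY nb t t0; apply: contrapT => nD; apply: nb; exists t => t' t'0 Dt'.
rewrite leNgt; apply/negP => tt'; apply: nD.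
by apply: (convex_segment cD DY Dt'); rewrite t0 ltW.
Qed.

Lemma is_convex_conv_hull (S : set V) : is_convex (conv_hull S).
Proof.
move=> x z l [q1 [w1 [y1 [w1p [w1s [y1X ->]]]]]] [q2 [w2 [y2 [w2p [w2s [y2X ->]]]]]].
move=> /andP [l0 l1].
pose pick (k : 'I_(q1 + q2)) := match fintype.split k with
  | inl i => ((1 - l) * w1 i, y1 i) | inr j => (l * w2 j, y2 j) end.
have sl i : fintype.split (lshift q2 i) = inl i := unsplitK (inl _ i).
have sr j : fintype.split (rshift q1 j) = inr j := unsplitK (inr _ j).
have l0' : 0 <= 1 - l by rewrite subr_ge0.
exists (q1 + q2), (fun k => (pick k).1), (fun k => (pick k).2); split.
  by move=> k; rewrite /pick; case: fintype.split => i /=; apply: mulr_ge0.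
split.
  rewrite big_split_ord /=.
  under eq_bigr do rewrite /pick sl.
  under [X in _ + X]eq_bigr do rewrite /pick sr.
  by rewrite -!mulr_sumr w1s w2s !mulr1 subrK.
split; first by move=> k; rewrite /pick; case: fintype.split => i /=.
rewrite big_split_ord /= !scaler_sumr.
by congr (_ + _); apply: eq_bigr => i _; rewrite /pick ?sl ?sr scalerA.
Qed.

End ConvexGeometry.

Section ClosedConvexSets.
Variables (R : realType) (V : normedModType R).
Implicit Types (D : set V) (x y Y Z : V).

Lemma closure_normP (A : set V) z :
  closure A z <-> forall e : R, 0 < e -> exists2 y, A y & `|z - y| < e.
Proof.
split=> [Az e e0|H B /nbhs_ballP [e /= e0 eB]].
  have [y [Ay By]] := Az _ (nbhsx_ballx z _ e0).
  by exists y => //; move: By; rewrite -ball_normE.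
have [y Ay zy] := H e e0; exists y; split=> //; apply: eB.
by rewrite -ball_normE.
Qed.

Lemma closed_normP D z : closed D ->
  (forall e : R, 0 < e -> exists2 y, D y & `|z - y| < e) -> D z.
Proof. by move=> clD /closure_normP; apply: clD. Qed.

Lemma is_convex_closure (C : set V) : is_convex C -> is_convex (closure C).
Proof.
move=> cC x y l /closure_normP Cx /closure_normP Cy /andP [l0 l1].
apply/closure_normP => e e0.
have [x' Cx' xx'] := Cx e e0; have [y' Cy' yy'] := Cy e e0.
exists ((1 - l) *: x' + l *: y'); first by apply: cC; rewrite ?l0.
have -> : (1 - l) *: x + l *: y - ((1 - l) *: x' + l *: y') =
    (1 - l) *: (x - x') + l *: (y - y') by rewrite !scalerBr opprD addrACA.
apply: le_lt_trans (ler_normD _ _) _.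
rewrite !normrZ !ger0_norm ?subr_ge0 //.
apply: le_lt_trans (_ : _ <= Num.max `|x - x'| `|y - y'|) _; last by rewrite gt_max xx'.
rewrite -[X in _ <= X]mul1r -[X in X * Num.max _ _](subrK l) [X in _ <= X]mulrDl.
by apply: lerD; rewrite ler_wpM2l ?subr_ge0 // le_max lexx ?orbT.
Qed.

Lemma closed_rec_cone D : closed D -> closed (rec_cone D).
Proof.
move=> clD.
have -> : rec_cone D = \bigcap_(xt in [set xt : V * R | D xt.1 /\ 0 <= xt.2])
                        ((fun d => xt.1 + xt.2 *: d) @^-1` D).
  apply/seteqP; split=> [d rd [x t] [Dx t0]|d rd x Dx t t0]; first exact: rd.
  exact: (rd (x, t)).
apply: closed_bigI => -[x t] _; apply: preimage_closed => // d _.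
by apply: cvgD; [exact: cvg_cst | exact: scaler_continuous].
Qed.

(* The points [(1 - l) x + l (Y + (t / l) Z)] of [D] tend to [x + t Z] as [l -> 0]. *)
Lemma rec_cone_of_ray D Y Z : is_convex D -> closed D -> D Y ->
  (forall t, 0 <= t -> D (Y + t *: Z)) -> rec_cone D Z.
Proof.
move=> cD clD DY ray x Dx t t0; apply: closed_normP => // e e0.
pose N := `|Y - x|; have N0 : 0 <= N := normr_ge0 _.
pose l := e / (N + e).
have Ne : 0 < N + e by rewrite ltr_wpDl.
have l0 : 0 < l by rewrite divr_gt0.
have l1 : 0 <= l <= 1 by rewrite ltW //= ler_pdivrMr // mul1r lerDr.
have Dx0 : D (x + 0) by rewrite addr0.
have Dxt : D (x + (Y + (t / l) *: Z - x)).
  by rewrite addrC subrK; apply: ray; rewrite divr_ge0 // ltW.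
have := convex_shift cD Dx0 Dxt l1.
rewrite scaler0 add0r scalerBr scalerDr scalerA mulrC divfK ?gt_eqF // addrAC.
move=> Dl; exists (x + (l *: Y - l *: x + t *: Z)) => //.
rewrite [l *: Y - l *: x + _]addrC addrA opprD addNKr normrN -scalerBr normrZ.
by rewrite gtr0_norm // -/N /l mulrAC ltr_pdivrMr // mulrDr ltrDl mulr_gt0.
Qed.

Lemma ray_bounded_or_rec_cone D Y Z : is_convex D -> closed D -> D Y ->
  ray_bounded D Y Z \/ rec_cone D Z.
Proof.
move=> cD clD DY; case: (pselect (ray_bounded D Y Z)) => [|nb]; first by left.
by right; apply: (rec_cone_of_ray cD clD DY); exact: unbounded_ray.
Qed.

Lemma closed_ray_max D Y Z : closed D -> D Y -> ray_bounded D Y Z ->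
  exists ts, [/\ 0 <= ts, D (Y + ts *: Z) &
    forall t, 0 <= t -> D (Y + t *: Z) -> t <= ts].
Proof.
move=> clD DY [M hM].
pose T := [set t : R | 0 <= t /\ D (Y + t *: Z)].
have T0 : T 0 by rewrite /T /= scale0r addr0.
have supT : has_sup T by split; [exists 0 | exists M => t [t0 Dt]; exact: hM].
have clT : closed T.
  apply: closedI; first exact: closed_ge.
  apply: preimage_closed => // t _.
  by apply: cvgD; [exact: cvg_cst | exact: scalel_continuous].
have [sup0 Dsup] : T (sup T) by apply/clT/closure_sup; case: supT.
by exists (sup T); split=> // t t0 Dt; apply: sup_upper_bound.
Qed.

End ClosedConvexSets.

Section FaceDimension.
Variables (R : realType) (V : vectType R).
Implicit Types (D : set V) (Y Z : V).

Lemma vspace_of_subspace (S : set V) : S 0 ->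
  (forall u v, S u -> S v -> S (u + v)) -> (forall (k : R) u, S u -> S (k *: u)) ->
  exists U : {vspace V}, forall u, u \in U <-> S u.
Proof.
move=> S0 SD SZ.
pose P d := `[< exists U : {vspace V}, \dim U = d /\ forall u, u \in U -> S u >].
have P0 : P 0%N.
  by apply/asboolP; exists 0%VS; rewrite dimv0; split=> // u; rewrite memv0 => /eqP ->.
have ubP d : P d -> (d <= \dim (fullv : {vspace V}))%N.
  by move=> /asboolP [U [<- _]]; apply: dimvS; exact: subvf.
have [d /asboolP [U [dU US]] dmax] := ex_maxnP (ex_intro P 0%N P0) ubP.
exists U => u; split=> [/US //|Su]; apply: contrapT => nUu.
have UuS w : w \in (U + <[u]>)%VS -> S w.
  by move=> /memv_addP [x /US Sx [y /vlineP [k ->] ->]]; exact/SD/SZ.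
have : (\dim (U + <[u]>) <= d)%N by apply/dmax/asboolP; exists (U + <[u]>)%VS.
rewrite -dU leqNgt => /negP; apply; rewrite ltnNge; apply/negP => le_dim.
apply: nUu; have /eqP -> : U == (U + <[u]>)%VS by rewrite eqEdim addvSl.
exact/(subvP (addvSr U _))/memv_line.
Qed.

Lemma face_dir_vspace D Y : is_convex D -> D Y ->
  exists U : {vspace V}, forall u, u \in U <-> face_dir D Y u.
Proof.
move=> cD DY; apply: vspace_of_subspace; first exact: face_dir0.
  by move=> u v; exact: face_dirD.
by move=> k u; exact: face_dirZ.
Qed.

Lemma aff_dim_set1 Y : aff_dim [set Y] = 0%N.
Proof.
apply/eqP; rewrite -leqn0 /aff_dim; case: ex_minnP => m _ /(_ 0%N); apply.
by apply/asboolP; exists [::]; split=> // x y -> ->; rewrite subrr mem0v.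
Qed.

Definition face_dim_le D Y (d : nat) :=
  exists2 U : {vspace V}, (forall u, u \in U <-> face_dir D Y u) & (\dim U <= d)%N.

Lemma aff_dim_min_face D Y d : face_dim_le D Y d -> (aff_dim (min_face D Y) <= d)%N.
Proof.
move=> [U hU dU]; rewrite /aff_dim; case: ex_minnP => m _ /(_ (\dim U)) mmin.
apply/(leq_trans _ dU)/mmin/asboolP; exists (vbasis U); split; first exact: size_tuple.
move=> x y [_ /hU xY] [_ /hU yY]; rewrite (span_basis (vbasisP U)).
have -> : x - y = (x - Y) - (y - Y) by rewrite opprB addrA subrK.
exact: memvB.
Qed.

(* Every face direction at the far end [Y + ts Z] of the chord of [D] through
   [Y] is one at [Y] (by [face_dir_inward]), but [Z] is not. *)
Lemma face_dim_drop D Y Z (ts : R) (U : {vspace V}) : is_convex D -> D Y ->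
  (forall u, u \in U <-> face_dir D Y u) -> Z \in U -> D (Y + ts *: Z) ->
  (forall t, 0 <= t -> D (Y + t *: Z) -> t <= ts) ->
  face_dim_le D (Y + ts *: Z) (\dim U).-1.
Proof.
move=> cD DY hU UZ Dts tmax; have [e e0 [Dp Dm]] := (hU Z).1 UZ.
have ts0 : 0 < ts by apply: lt_le_trans e0 (tmax _ (ltW e0) Dp).
have [U' hU'] := face_dir_vspace cD Dts; exists U' => //.
have U'U : (U' <= U)%VS.
  apply/subvP => u /hU' hu; apply/hU; apply: (face_dir_inward cD (divr_gt0 e0 ts0)) hu.
  by rewrite opprD addNKr scalerN scalerA divfK ?gt_eqF.
have U'Z : Z \notin U'.
  apply/negP => /hU' [e' e'0 [+ _]]; rewrite -addrA -scalerDl => /(tmax _).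
  by move=> /(_ (addr_ge0 (ltW ts0) (ltW e'0))); rewrite gerDl leNgt e'0.
suff : (\dim U' < \dim U)%N by lia.
rewrite ltnNge; apply: contra U'Z => dimUU'.
by have /eqP -> : U' == U by rewrite eqEdim U'U.
Qed.

End FaceDimension.

Section Descent.
Variables (R : realType) (n p : nat).
Local Notation V := 'M[R]_(n, p).
Implicit Types (D : set V) (s : seq V) (g Y Z : V).

Lemma mxipC (A X : V) : mxip A X = mxip X A.
Proof. by rewrite /mxip -mxtrace_tr trmx_mul trmxK. Qed.

Lemma mxipDr (A X Y : V) : mxip A (X + Y) = mxip A X + mxip A Y.
Proof. by rewrite /mxip mulmxDr mxtraceD. Qed.

Lemma mxipZr (A X : V) (a : R) : mxip A (a *: X) = a * mxip A X.
Proof. by rewrite /mxip -scalemxAr mxtraceZ. Qed.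

Lemma mxipNr (A X : V) : mxip A (- X) = - mxip A X.
Proof. by rewrite -scaleN1r mxipZr mulN1r. Qed.

Lemma mxip0l (X : V) : mxip 0 X = 0.
Proof. by rewrite /mxip trmx0 mul0mx mxtrace0. Qed.

Definition mxipl (X : V) : V -> R^o := fun A => mxip A X.

Lemma mxipl_is_linear X : linear (mxipl X).
Proof. by move=> a A B; rewrite /mxipl !(mxipC _ X) mxipDr mxipZr. Qed.

HB.instance Definition _ X :=
  GRing.isLinear.Build R V R^o *:%R (mxipl X) (mxipl_is_linear X).

Definition orth s Z := forall B, B \in s -> mxip B Z = 0.

Lemma orth0 s : orth s 0.
Proof. by move=> B _; rewrite mxipC mxip0l. Qed.

Lemma orthD s X Y : orth s X -> orth s Y -> orth s (X + Y).
Proof. by move=> oX oY B sB; rewrite mxipDr oX ?oY ?addr0. Qed.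

Lemma orthZ s (k : R) X : orth s X -> orth s (k *: X).
Proof. by move=> oX B sB; rewrite mxipZr oX ?mulr0. Qed.

Lemma orth_span s Z A : orth s Z -> A \in (span s)%VS -> mxip A Z = 0.
Proof.
move=> oZ sA; have : (span s <= lker (linfun (mxipl Z)))%VS.
  by apply/span_subvP => B sB; rewrite memv_ker lfunE /= /mxipl oZ.
by move=> /subvP /(_ A sA); rewrite memv_ker lfunE => /eqP.
Qed.

Lemma exists_orth s (U : {vspace V}) : (size s < \dim U)%N ->
  exists2 Z, Z \in U & Z != 0 /\ orth s Z.
Proof.
elim: s U => [|B s IH] U /= hs.
  by exists (vpick U); rewrite ?memv_pick // vpick0 -dimv_eq0 -lt0n.
pose f := linfun (mxipl B).
have fU1 : (\dim (f @: U) <= 1)%N by rewrite (leq_trans (dimvS (subvf _))) ?dimvf.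
have [|Z] := IH (U :&: lker f)%VS.
  move: (limg_ker_dim f U) fU1 hs.
  by move: (\dim (f @: U)) (\dim U) (\dim (U :&: lker f)) => a b c; lia.
rewrite memv_cap memv_ker lfunE /= => /andP [UZ /eqP fZ] [nZ oZ].
exists Z => //; split=> // B'; rewrite inE => /orP [/eqP ->|]; last exact: oZ.
by rewrite mxipC.
Qed.

Definition low_face_below D s g r Y := exists Y',
  [/\ D Y', orth s (Y' - Y), mxip g Y' <= mxip g Y & face_dim_le D Y' r].

Definition descent_dir D s g := exists Z, [/\ rec_cone D Z, orth s Z & mxip g Z < 0].

Lemma low_face_below_shift D s g r Y Z (t : R) : orth s Z -> mxip g Z <= 0 ->
  0 <= t -> low_face_below D s g r (Y + t *: Z) -> low_face_below D s g r Y.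
Proof.
move=> oZ gZ t0 [Y' [DY' oY' gY' fY']]; exists Y'; split=> //.
  have -> : Y' - Y = Y' - (Y + t *: Z) + t *: Z by rewrite opprD addrA subrK.
  exact/orthD/orthZ.
by apply: le_trans gY' _; rewrite mxipDr mxipZr gerDl mulr_ge0_le0.
Qed.

(* Induction on the dimension of the smallest face containing [Y]: while it
   exceeds [r], some face direction [Z] is orthogonal to [s]; moving along [Z]
   (or [-Z]) without increasing the objective either reaches the relative
   boundary of the face, which lowers its dimension, or never stops, which
   yields a recession direction. *)
Lemma low_face_descent D s g r Y : is_convex D -> closed D -> no_line D ->
  (size s <= r)%N -> D Y -> low_face_below D s g r Y \/ descent_dir D s g.
Proof.
move=> cD clD nlD sr DY; have [U hU] := face_dir_vspace cD DY.
move: {2}(\dim U) (leqnn (\dim U)) => d; elim: d Y DY U hU => [|d IH] Y DY U hU dU.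
  left; exists Y; rewrite subrr; split=> //; first exact: orth0.
  by exists U => //; apply: leq_trans dU _.
have [Ur|rU] := leqP (\dim U) r.
  by left; exists Y; rewrite subrr; split=> //; [exact: orth0 | exists U].
have drop Z : Z \in U -> orth s Z -> mxip g Z <= 0 -> ray_bounded D Y Z ->
    low_face_below D s g r Y \/ descent_dir D s g.
  move=> UZ oZ gZ /(closed_ray_max clD DY) [ts [ts0 Dts tmax]].
  have [U' hU' dU'] := face_dim_drop cD DY hU UZ Dts tmax.
  case: (IH _ Dts U' hU'); first by lia.
    by move=> low; left; exact: low_face_below_shift low.
  by right.
have [Z UZ [nZ oZ]] := exists_orth (leq_ltn_trans sr rU).
wlog gZ : Z UZ nZ oZ / mxip g Z <= 0 => [hwlog|].
  have [gZ|gZ] := leP (mxip g Z) 0; first exact: (hwlog Z).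
  apply: (hwlog (- Z)); rewrite ?memvN ?oppr_eq0 ?mxipNr ?oppr_le0 ?ltW //.
  by rewrite -scaleN1r; exact: orthZ.
have [|rZ] := ray_bounded_or_rec_cone Z cD clD DY; first exact: drop.
have [gZn|gZ0] := ltP (mxip g Z) 0; first by right; exists Z.
have [|rNZ] := ray_bounded_or_rec_cone (- Z) cD clD DY.
  apply: drop; rewrite ?memvN ?mxipNr ?oppr_le0 // -scaleN1r; exact: orthZ.
by move: nZ; rewrite (rec_cone_opp_eq0 nlD DY rZ rNZ) eqxx.
Qed.

Lemma exists_low_face_point D s r Y : is_convex D -> closed D -> no_line D ->
  (size s <= r)%N -> D Y -> exists Y', [/\ D Y', orth s (Y' - Y) & face_dim_le D Y' r].
Proof.
move=> cD clD nlD sr DY; case: (low_face_descent 0 cD clD nlD sr DY).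
  by move=> [Y' [DY' oY' _ fY']]; exists Y'.
by move=> [Z [_ _]]; rewrite mxip0l ltxx.
Qed.

Lemma exists_domain_point_below (X D : set V) s g Y :
  is_convex D -> closed D -> no_line D -> D Y ->
  (forall Fa Fb, is_face D Fa -> (aff_dim Fa <= size s)%N ->
     is_face (rec_cone D) Fb -> (aff_dim Fb <= (size s).+1)%N ->
     mink_sum Fa Fb `<=` X) ->
  exists Y', [/\ X Y', orth s (Y' - Y) & mxip g Y' <= mxip g Y].
Proof.
move=> cD clD nlD DY hX; pose K := rec_cone D.
have inX Y' Fb b : D Y' -> face_dim_le D Y' (size s) -> is_face K Fb ->
    (aff_dim Fb <= (size s).+1)%N -> Fb b -> X (Y' + b).
  move=> DY' fY' fFb dFb Fbb.
  apply: (hX _ _ (is_face_min_face cD DY') (aff_dim_min_face fY') fFb dFb).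
  by exists Y'; [rewrite /min_face /= subrr; split=> //; exact: face_dir0 | exists b].
case: (low_face_descent g cD clD nlD (leqnn (size s)) DY).
  move=> [Y' [DY' oY' gY' fY']]; exists Y'; split=> //; rewrite -[Y']addr0.
  apply: (inX _ [set 0]) => //; first exact: is_face_rec_cone0 DY nlD.
  by rewrite aff_dim_set1.
move=> [Z [KZ oZ gZ]].
have [Z' [KZ' oZ' fZ']] := exists_low_face_point (is_convex_rec_cone cD)
  (closed_rec_cone clD) (no_line_rec_cone DY nlD) (leqnn (size (g :: s))) KZ.
have oZ's : orth s Z'.
  rewrite -(subrK Z Z'); apply: orthD oZ => B sB.
  by apply: oZ'; rewrite inE sB orbT.
have gZ' : mxip g Z' < 0.
  by have := oZ' g (mem_head _ _); rewrite mxipDr mxipNr => /subr0_eq ->.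
have [Y' [DY' oY' fY']] := exists_low_face_point cD clD nlD (leqnn (size s)) DY.
pose t := Num.max 0 ((mxip g Y' - mxip g Y) / - mxip g Z').
have t0 : 0 <= t by rewrite le_max lexx.
exists (Y' + t *: Z'); split.
- apply: (inX _ (min_face K Z')) => //.
  + exact: is_face_min_face (is_convex_rec_cone cD) KZ'.
  + exact: aff_dim_min_face.
  split; first exact: rec_coneZ.
  rewrite -[X in _ - X](scale1r Z') -scalerBl.
  exact: face_dirZ KZ' (face_dir_rec_cone KZ').
- by rewrite addrAC; apply: orthD oY' (orthZ _ oZ's).
- have : mxip g Y' - mxip g Y <= t * - mxip g Z'.
    by rewrite -ler_pdivrMr ?oppr_gt0 // le_max lexx orbT.
  by rewrite mxipDr mxipZr mulrN; lra.
Qed.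

End Descent.

Theorem theorem6 (R : realType) (kd : qkind) (n p k t : nat)
  (F : 'I_t -> 'M[R]_(n, p) -> R) (m mt : nat) :
  (0 < k)%N -> (k <= n)%N -> (n <= p)%N ->
  (forall j, {within Qset kd n p, continuous (F j)}) ->
  let X := domain_set kd k F in
  X !=set0 -> closed X -> no_line (clconv X) -> (mt <= m)%N ->
  (forall Fa Fb : set 'M[R]_(n, p),
     is_face (clconv X) Fa -> (aff_dim Fa <= mt)%N ->
     is_face (rec_cone (clconv X)) Fb -> (aff_dim Fb <= mt.+1)%N ->
     mink_sum Fa Fb `<=` X) ->
  forall (A0 : 'M[R]_(n, p)) (A : 'I_m -> 'M[R]_(n, p)) (bl bu : 'I_m -> \bar R),
    (forall i, (bl i <= bu i)%E) ->
    lmi_dim A = mt ->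
    lin_inf A0 (lmi_feas X A bl bu) = lin_inf A0 (lmi_feas (clconv X) A bl bu).
Proof.
move=> _ _ _ _ X _ _ nlX _ hface A0 A bl bu _ hdim.
set D := clconv X.
have clD : closed D := @closed_closure _ (conv_hull X).
have cD : is_convex D := is_convex_closure (@is_convex_conv_hull _ _ X).
have XD : X `<=` D.
  move=> x Xx; apply: subset_closure; exists 1%N, (fun=> 1), (fun=> x).
  by do 3?split=> *; rewrite ?big_ord1 ?scale1r.
pose s : seq 'M[R]_(n, p) := vbasis (span [seq A i | i <- enum 'I_m]).
have orthA Z : orth s Z -> forall i, mxip (A i) Z = 0.
  move=> oZ i; apply: orth_span oZ _; rewrite (span_basis (vbasisP _)).
  by apply/memv_span/map_f; rewrite mem_enum.
have hs : size s = mt by rewrite size_tuple -hdim.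
rewrite /lin_inf; apply/eqP; rewrite eq_le; apply/andP; split; last first.
  by apply: ereal_inf_le_tmp => _ [Y [XY hY] <-]; exists Y => //; split=> //; exact: XD.
apply: le_ereal_inf_tmp => _ [Y [DY hY] <-].
have := exists_domain_point_below (X := X) (s := s) A0 cD clD nlX DY.
rewrite hs => /(_ hface) [Y' [XY' oY' gY']].
apply: (le_trans (ereal_inf_lbound _)); first exists Y' => //.
  by split=> // i; rewrite -(subrK Y Y') mxipDr orthA // add0r; exact: hY.
by rewrite lee_fin.
Qed.
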